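(* Let $R$ be a ring, $S$ an $R$-algebra, and $\omega_{S/R}\colon R[[t]]\otimes_RS\to S[[t]]$ the natural map. The image of $\omega_{S/R}$ is the subring of series $\sum_ns_nt^n\in S[[t]]$ for which there exists a finitely generated $R$-submodule $M\subseteq S$ with $s_n\in M$ for all $n\in\mathbb{N}$. If every finitely generated $R$-submodule of $S$ is contained in a finitely presented $R$-submodule of $S$, then $\omega_{S/R}$ is injective. *)

From HB Require Import structures.
From mathcomp Require Import all_boot all_order all_algebra.
Set Implicit Arguments. Unset Strict Implicit. Unset Printing Implicit Defensive.
Import Order.TTheory GRing.Theory Num.Theory.
Local Open Scope ring_scope.

Definition pseries (A : Type) := nat -> A.

Section Defs.
Variables (R : comPzRingType) (S : comAlgType R).

Definition spanned_by (M : S -> Prop) (n : nat) (m : 'I_n -> S) : Prop :=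
  forall x, M x <-> exists c : 'I_n -> R, x = \sum_(i < n) c i *: m i.

Definition fg_submod (M : S -> Prop) : Prop :=
  exists n (m : 'I_n -> S), spanned_by M m.

Definition fp_submod (M : S -> Prop) : Prop :=
  exists n (m : 'I_n -> S), spanned_by M m /\
    exists k (rel : 'I_k -> 'I_n -> R),
      forall c : 'I_n -> R,
        (\sum_(i < n) c i *: m i = 0) <->
        exists d : 'I_k -> R, forall i, c i = \sum_(j < k) d j * rel j i.

(* Elements are represented by finite formal sums  sum_k f_k (x) s_k ,
   i.e. lists of pairs; tens_eq is the congruence presenting the tensor
   product (free abelian monoid on pairs modulo biadditivity, R-balancedness
   and 0 (x) s = 0; the quotient is a group, namely R[[t]] (x)_R S). *)
Definition tensor := seq (pseries R * S).

Inductive tens_eq : tensor -> tensor -> Prop :=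
| te_refl l : tens_eq l l
| te_sym l1 l2 : tens_eq l1 l2 -> tens_eq l2 l1
| te_trans l1 l2 l3 : tens_eq l1 l2 -> tens_eq l2 l3 -> tens_eq l1 l3
| te_catl l1 l2 l3 : tens_eq l1 l2 -> tens_eq (l3 ++ l1) (l3 ++ l2)
| te_catr l1 l2 l3 : tens_eq l1 l2 -> tens_eq (l1 ++ l3) (l2 ++ l3)
| te_comm l1 l2 : tens_eq (l1 ++ l2) (l2 ++ l1)
| te_addl (f g : pseries R) (s : S) :
    tens_eq [:: (fun n => f n + g n, s)] [:: (f, s); (g, s)]
| te_addr (f : pseries R) (s s' : S) :
    tens_eq [:: (f, s + s')] [:: (f, s); (f, s')]
| te_scale (r : R) (f : pseries R) (s : S) :
    tens_eq [:: (fun n => r * f n, s)] [:: (f, r *: s)]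
| te_zero (s : S) : tens_eq [:: (fun _ => 0, s)] [::].

Definition omega (l : tensor) : pseries S :=
  fun n => \sum_(p <- l) (p.1 n) *: p.2.

End Defs.

From HB Require Import structures.
From mathcomp Require Import all_boot all_order all_algebra.
From Stdlib Require Import IndefiniteDescription FunctionalExtensionality.
Set Implicit Arguments. Unset Strict Implicit. Unset Printing Implicit Defensive.
Import Order.TTheory GRing.Theory Num.Theory.
Local Open Scope ring_scope.

(* A tensor [sum_k f_k (x) s_k] is mapped to a series whose coefficients lie in
   the span of the [s_k]; conversely a series with coefficients in the span of
   [m_1, ..., m_p] is the image of [sum_i c_i (x) m_i], where [c_i] collects
   the coordinates of the coefficients on [m_i].
   For injectivity, choose a finitely presented submodule [N] with generators
   [m_i] and relation rows [rel_j] containing every [s_k], and rewrite the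
   tensor as [sum_i F_i (x) m_i].  If its image vanishes, then for each [n] the
   vector [(F_i n)_i] is a relation, hence [F_i n = sum_j D_j n * rel_j i] for
   some [D_j n]; regrouping gives [sum_j D_j (x) (sum_i rel_j i *: m_i)],
   which is zero. *)

Section Tensor.
Variables (R : comPzRingType) (S : comAlgType R).
Local Notation pair := (pseries R * S)%type.
Local Notation "l1 ~t l2" := (@tens_eq R S l1 l2) (at level 70).

Lemma tens_eq_cat (l1 l2 l3 l4 : seq pair) :
  l1 ~t l2 -> l3 ~t l4 -> l1 ++ l3 ~t l2 ++ l4.
Proof. by move=> h12 h34; apply: te_trans (te_catr _ h12) (te_catl _ h34). Qed.

Lemma tens_eq_big (I : Type) (r : seq I) (P : pred I) (F G : I -> seq pair) :
  (forall i, P i -> F i ~t G i) ->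
  \big[cat/[::]]_(i <- r | P i) F i ~t \big[cat/[::]]_(i <- r | P i) G i.
Proof.
move=> eqFG; apply: (big_ind2 (fun a b => a ~t b)) => //; first exact: te_refl.
exact: tens_eq_cat.
Qed.
Arguments tens_eq_big {I r P F G}.

Lemma tens_eq_big_split (I : Type) (r : seq I) (F G : I -> seq pair) :
  \big[cat/[::]]_(i <- r) (F i ++ G i) ~t
  \big[cat/[::]]_(i <- r) F i ++ \big[cat/[::]]_(i <- r) G i.
Proof.
elim: r => [|a r IHr]; first by rewrite !big_nil; exact: te_refl.
rewrite !big_cons; apply: te_trans (te_catl _ IHr) _.
rewrite -!catA; apply: te_catl; rewrite !catA; apply: te_catr; exact: te_comm.
Qed.

Lemma tens_eq_exchange_big (I J : Type) (r1 : seq I) (r2 : seq J)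
    (F : I -> J -> seq pair) :
  \big[cat/[::]]_(i <- r1) \big[cat/[::]]_(j <- r2) F i j ~t
  \big[cat/[::]]_(j <- r2) \big[cat/[::]]_(i <- r1) F i j.
Proof.
elim: r1 => [|a r1 IHr1].
  rewrite big_nil; under eq_bigr do rewrite big_nil.
  by rewrite big1_eq; exact: te_refl.
rewrite big_cons; apply: te_trans (te_catl _ IHr1) _.
under [X in _ ~t X]eq_bigr do rewrite big_cons.
exact/te_sym/tens_eq_big_split.
Qed.

Lemma tens_eq_sum_series (I : Type) (r : seq I) (f : I -> pseries R) (s : S) :
  \big[cat/[::]]_(i <- r) [:: (f i, s)] ~t
  [:: (fun n => \sum_(i <- r) f i n, s)].
Proof.
elim: r => [|a r IHr].
  rewrite big_nil (_ : (fun n => _) = fun _ => 0); last first.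
    by apply: functional_extensionality => n; rewrite big_nil.
  exact/te_sym/te_zero.
rewrite big_cons; apply: te_trans (te_catl _ IHr) _.
rewrite (_ : (fun n => \sum_(i <- a :: r) f i n) =
             fun n => f a n + \sum_(i <- r) f i n); last first.
  by apply: functional_extensionality => n; rewrite big_cons.
exact/te_sym/te_addl.
Qed.

Lemma tens_eq_vec0 (f : pseries R) : [:: (f, 0 : S)] ~t [::].
Proof.
have := te_scale 0 f (0 : S); rewrite scaler0 => /te_sym/te_trans; apply.
rewrite (_ : (fun n => _) = fun _ => 0); first exact: te_zero.
by apply: functional_extensionality => n; rewrite mul0r.
Qed.

Lemma tens_eq_sum_vec (I : Type) (r : seq I) (f : pseries R) (s : I -> S) :
  [:: (f, \sum_(i <- r) s i)] ~t \big[cat/[::]]_(i <- r) [:: (f, s i)].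
Proof.
elim: r => [|a r IHr]; first by rewrite !big_nil; exact: tens_eq_vec0.
rewrite !big_cons; apply: te_trans (te_addr _ _ _) _.
exact: (te_catl [:: (f, s a)] IHr).
Qed.

Lemma tens_eq_lincomb (I : Type) (r : seq I) (f : pseries R) (c : I -> R)
    (m : I -> S) :
  [:: (f, \sum_(i <- r) c i *: m i)] ~t
  \big[cat/[::]]_(i <- r) [:: (fun n => c i * f n, m i)].
Proof.
apply: te_trans (tens_eq_sum_vec _ _ _) _; apply: tens_eq_big => i _.
exact/te_sym/te_scale.
Qed.

Definition tens_opp (l : seq pair) : seq pair :=
  map (fun p => (fun n => - p.1 n, p.2)) l.

Lemma tens_eq_cat_opp (l : seq pair) : l ++ tens_opp l ~t [::].
Proof.
elim: l => [|[f s] l IHl] /=; first exact: te_refl.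
set q := (fun n => - f n, s).
apply: te_trans (_ : [:: (f, s); q] ++ (l ++ tens_opp l) ~t _).
  apply: (te_catl [:: (f, s)]).
  by have := te_catr (tens_opp l) (te_comm l [:: q]); rewrite -!catA.
apply: te_trans (te_catl _ IHl) _; rewrite cats0.
apply: te_trans (te_sym (te_addl _ _ _)) _.
rewrite (_ : (fun n => _) = fun _ => 0); first exact: te_zero.
by apply: functional_extensionality => n; rewrite subrr.
Qed.

Lemma tens_eq_subr0 (l1 l2 : seq pair) : l1 ++ tens_opp l2 ~t [::] -> l1 ~t l2.
Proof.
move=> h; apply: te_trans (_ : l1 ~t (l1 ++ tens_opp l2) ++ l2) _.
  rewrite -catA -{1}(cats0 l1); apply: te_catl.
  exact/te_sym/(te_trans (te_comm _ _))/tens_eq_cat_opp.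
exact: (te_catr l2 h).
Qed.

Lemma tensor_big_nth (l : seq pair) (p0 : pair) :
  l = \big[cat/[::]]_(k < size l) [:: ((nth p0 l k).1, (nth p0 l k).2)].
Proof.
under eq_bigr do rewrite -surjective_pairing.
rewrite -(big_mkord xpredT (fun k => [:: nth p0 l k])).
rewrite -(big_nth p0 xpredT (fun p => [:: p])).
by elim: l => [|p l IHl]; rewrite ?big_nil ?big_cons -?IHl.
Qed.

Lemma omega_cat (l1 l2 : seq pair) n : omega (l1 ++ l2) n = omega l1 n + omega l2 n.
Proof. by rewrite /omega big_cat. Qed.

Lemma omega_big (I : Type) (r : seq I) (F : I -> seq pair) n :
  omega (\big[cat/[::]]_(i <- r) F i) n = \sum_(i <- r) omega (F i) n.
Proof.
apply: (big_morph (fun l : seq pair => omega l n)) => [l1 l2|]; first exact: omega_cat.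
by rewrite /omega big_nil.
Qed.

Lemma omega_seq1 (p : pair) n : omega [:: p] n = p.1 n *: p.2.
Proof. by rewrite /omega big_seq1. Qed.

Lemma omega_tens_opp (l : seq pair) n : omega (tens_opp l) n = - omega l n.
Proof. by rewrite /omega big_map -sumrN; apply: eq_bigr => p _; rewrite scaleNr. Qed.

Lemma omega_tens_eq (l1 l2 : seq pair) : l1 ~t l2 -> omega l1 = omega l2.
Proof.
move=> h; apply: functional_extensionality => n.
elim: h => {l1 l2} //=.
- by move=> l1 l2 l3 _ -> _ ->.
- by move=> l1 l2 l3 _ eq12; rewrite !omega_cat eq12.
- by move=> l1 l2 l3 _ eq12; rewrite !omega_cat eq12.
- by move=> l1 l2; rewrite !omega_cat addrC.
- by move=> f g s; rewrite /omega !big_cons !big_nil /= scalerDl !addr0.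
- by move=> f s s'; rewrite /omega !big_cons !big_nil /= scalerDr !addr0.
- by move=> r f s; rewrite /omega !big_cons !big_nil /= scalerA mulrC.
- by move=> s; rewrite /omega !big_cons !big_nil /= scale0r !addr0.
Qed.

Definition span (p : nat) (m : 'I_p -> S) : S -> Prop :=
  fun x => exists c : 'I_p -> R, x = \sum_(i < p) c i *: m i.

Lemma fg_submod_span (p : nat) (m : 'I_p -> S) : fg_submod (span m).
Proof. by exists p, m. Qed.

Lemma span_gen (p : nat) (m : 'I_p -> S) (k : 'I_p) : span m (m k).
Proof.
exists (fun i => (i == k)%:R); rewrite (bigD1 k) //= eqxx scale1r big1 ?addr0 //.
by move=> i /negbTE ->; rewrite scale0r.
Qed.

Definition tens_vecs (l : seq pair) (k : 'I_(size l)) : S :=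
  (nth (fun _ => 0, 0) l k).2.
Arguments tens_vecs : clear implicits.

Lemma omega_in_span (l : seq pair) n : span (tens_vecs l) (omega l n).
Proof.
exists (fun k => (nth (fun _ => 0, 0) l k).1 n).
by rewrite /omega (big_nth (fun _ => 0, 0)) big_mkord.
Qed.

Lemma omega_lincomb (p : nat) (m : 'I_p -> S) (c : 'I_p -> pseries R) :
  omega (\big[cat/[::]]_(i < p) [:: (c i, m i)]) =
  fun n => \sum_(i < p) c i n *: m i.
Proof.
apply: functional_extensionality => n; rewrite omega_big.
by apply: eq_bigr => i _; rewrite omega_seq1.
Qed.

Lemma tens_eq_change_gens (l : seq pair) (p : nat) (m : 'I_p -> S)
    (A : 'I_(size l) -> 'I_p -> R) :
  (forall k, tens_vecs l k = \sum_(i < p) A k i *: m i) ->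
  l ~t \big[cat/[::]]_(i < p)
         [:: (fun n => \sum_(k < size l) A k i * (nth (fun _ => 0, 0) l k).1 n,
              m i)].
Proof.
move=> lA; rewrite {1}(tensor_big_nth l (fun _ => 0, 0)).
apply: te_trans (tens_eq_big (G := fun k =>
    \big[cat/[::]]_(i < p) [:: (fun n => A k i * (nth (fun _ => 0, 0) l k).1 n,
                               m i)]) _) _.
  by move=> k _; rewrite -/(tens_vecs l k) lA; exact: tens_eq_lincomb.
apply: te_trans (tens_eq_exchange_big _ _ _) _.
by apply: tens_eq_big => i _; exact: tens_eq_sum_series.
Qed.

Lemma tens_eq0_relations (p q : nat) (m : 'I_p -> S) (rel : 'I_q -> 'I_p -> R)
    (F : 'I_p -> pseries R) (D : 'I_q -> pseries R) :
  (forall j, \sum_(i < p) rel j i *: m i = 0) ->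
  (forall i n, F i n = \sum_(j < q) D j n * rel j i) ->
  \big[cat/[::]]_(i < p) [:: (F i, m i)] ~t [::].
Proof.
move=> rel0 FD.
apply: te_trans (tens_eq_big (G := fun i =>
   \big[cat/[::]]_(j < q) [:: (fun n => rel j i * D j n, m i)]) _) _.
  move=> i _; rewrite (_ : F i = fun n => \sum_(j < q) rel j i * D j n).
    exact/te_sym/tens_eq_sum_series.
  apply: functional_extensionality => n; rewrite FD.
  by apply: eq_bigr => j _; rewrite mulrC.
apply: te_trans (tens_eq_exchange_big _ _ _) _.
apply: te_trans (tens_eq_big (G := fun _ => [::]) _) _; last first.
  by rewrite big1_eq; exact: te_refl.
by move=> j _; apply: te_trans (te_sym (tens_eq_lincomb _ _ _ _)) _;
  rewrite rel0; exact: tens_eq_vec0.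
Qed.

Lemma omega_eq0_tens_eq0 (l : seq pair) (N : S -> Prop) :
  fp_submod N -> (forall k, N (tens_vecs l k)) ->
  omega l = (fun _ => 0) -> l ~t [::].
Proof.
move=> [p [m [spanN [q [rel relP]]]]] Nl omega_l0.
have /functional_choice[A lA] : forall k, exists a : 'I_p -> R,
    tens_vecs l k = \sum_(i < p) a i *: m i by move=> k; apply/spanN.
have l_gens := tens_eq_change_gens lA.
have /functional_choice[D FD] : forall n, exists d : 'I_q -> R, forall i,
    \sum_(k < size l) A k i * (nth (fun _ => 0, 0) l k).1 n =
    \sum_(j < q) d j * rel j i.
  move=> n; apply/relP.
  by rewrite -[RHS](congr1 (fun g => g n) omega_l0) (omega_tens_eq l_gens)
    omega_lincomb.
apply: te_trans l_gens (tens_eq0_relations (D := fun j n => D n j) _ _) => //.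
move=> j; apply/(relP (rel j)); exists (fun j' => (j' == j)%:R) => i.
rewrite (bigD1 j) //= eqxx mul1r big1 ?addr0 //.
by move=> j' /negbTE ->; rewrite mul0r.
Qed.

End Tensor.
Arguments tens_vecs {R S} l k.

Theorem lemma2p4 (R : comPzRingType) (S : comAlgType R) :
  (forall g : pseries S,
     (exists l : tensor S, omega l = g) <->
     (exists M : S -> Prop, fg_submod M /\ forall n, M (g n)))
  /\
  ((forall M : S -> Prop, fg_submod M ->
      exists N : S -> Prop, fp_submod N /\ forall x, M x -> N x) ->
   forall l1 l2 : tensor S, omega l1 = omega l2 -> tens_eq l1 l2).
Proof.
split=> [g|fp_cover l1 l2 omega12]; first split.
- case=> l <-; exists (span (tens_vecs l)).
  by split; [exact: fg_submod_span | exact: omega_in_span].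
- case=> M [[p [m spanM]] Mg].
  have /functional_choice[c gc] : forall n, exists a : 'I_p -> R,
      g n = \sum_(i < p) a i *: m i by move=> n; apply/spanM.
  exists (\big[cat/[::]]_(i < p) [:: (fun n => c n i, m i)]).
  by rewrite omega_lincomb; apply: functional_extensionality => n; rewrite gc.
- apply: tens_eq_subr0.
  have [N [fpN span_subN]] := fp_cover _ (fg_submod_span (tens_vecs (l1 ++ tens_opp l2))).
  apply: (omega_eq0_tens_eq0 fpN) => [k|]; first exact/span_subN/span_gen.
  by apply: functional_extensionality => n;
    rewrite omega_cat omega_tens_opp omega12 subrr.
Qed.
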